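(* Let $T$ be a lifted graph, $F\colon T\to T$ a continuous sun-like map of degree 1 with branches $(X^i)_{i\in\Lambda}$, ${\cal P}=\{X^i_j\}$ a basic partition of $F$ and ${\cal G}$ its covering graph. Let $\alpha,\beta$ be vertices of ${\cal G}$ with an arrow $\alpha\to\beta$. Then there exist $A_0,\dots,A_n,A_{n+1}\in{\cal P}$ and $k\in\{1,\dots,N_{\ell(A_n)}\}$ such that $\alpha=A_0\dots A_n/\!\sim$, $\beta=A_0\dots A_nA_{n+1}/\!\sim$ and $A_{n+1}=X^{\ell(A_n)}_k$. Moreover, for all $j\in\{1,\dots,k-1\}$, $\langle\alpha\rangle$ positively $F$-covers $X^{\ell(A_n)}_j+p(A_n)$, and $\alpha\to X^{\ell(A_n)}_j$ is an arrow in ${\cal G}$.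
   Context: A lifted graph is a connected topological space $T$ with a homeomorphism $h\colon\mathbb R\to h(\mathbb R)\subset T$ and a homeomorphism $\tau\colon T\to T$ such that $\tau(h(x))=h(x+1)$, the closure of each connected component of $T\setminus h(\mathbb R)$ is a topological finite graph meeting $h(\mathbb R)$ in exactly one point, and only finitely many such components have closure meeting $h([0,1])$. Identify $h(\mathbb R)$ with $\mathbb R$, write $x+m:=\tau^m(x)$; $r_{\mathbb R}\colon T\to\mathbb R$ is the identity on $\mathbb R$ and maps a component $C$ of $T\setminus\mathbb R$ to the point $\overline C\cap\mathbb R$. $F$ has degree 1 if $F(x+1)=F(x)+1$. Let $T_{\mathbb R}:=\overline{\bigcup_{n\ge0}F^n(\mathbb R)}$, $X:=\overline{T\setminus T_{\mathbb R}}\cap r_{\mathbb R}^{-1}([0,1))$. $F$ is sun-like if $(T\setminus T_{\mathbb R})\cap r_{\mathbb R}^{-1}([0,1))$ consists of finitely many intervals with pairwise disjoint closures $X^i$, $i\in\Lambda$ (branches), each a compact interval meeting $T_{\mathbb R}$ in one endpoint $\min X^i$ (fixing the order of $X^i$). For $j\in\Lambda$, $r_j\colon T\to X^j$ is $r_j(x)=x$ for $x\in X^j$ and $r_j(x)=\min X^j$ otherwise. Positive covering: for nonempty compact intervals $I\subset X^i$, $J\subset X^j$, $n\ge1$, $p\in\mathbb Z$, $I$ positively $F^n$-covers $J+p$ if there exist $x\le y$ in $I$ with $r_j(F^n(x)-p)\le\min J$ and $\max J\le r_j(F^n(y)-p)$ (order of $X^j$). A basic partition is a finite family ${\cal P}=\{X^i_j: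 i\in\Lambda, 1\le j\le N_i\}$ of pairwise disjoint nonempty compact intervals $X^i_1<\dots<X^i_{N_i}$ in $X^i$, with $\ell(X^i_j)\in\Lambda$, $p(X^i_j)\in\mathbb Z$, such that $F(X^i_j)\subset(X^{\ell(X^i_j)}+p(X^i_j))\cup\mathrm{Int}(T_{\mathbb R})$, $F(\min X^i_j)=\min X^{\ell(X^i_j)}+p(X^i_j)$, and $F(X\setminus\bigcup X^i_j)\cap(X+\mathbb Z)=\emptyset$. For $A_0,\dots,A_n\in{\cal P}$, $\langle A_0\dots A_n\rangle:=F^n(\{x\in T: F^i(x)\in A_i+\mathbb Z,\ 0\le i\le n\})\cap X$. $A_0\dots A_n\sim B_0\dots B_m$ iff for some $k\le\min(n,m)$, $A_{n-i}=B_{m-i}$ ($0\le i\le k$) and $\langle A_0\dots A_{n-k}\rangle=A_{n-k}=B_{m-k}=\langle B_0\dots B_{m-k}\rangle$. The covering graph ${\cal G}$: vertices are classes $A_0\dots A_n/\!\sim$ with $\langle A_0\dots A_n\rangle\ne\emptyset$; arrow $\alpha\to\beta$ iff $\alpha=A_0\dots A_n/\!\sim$, $\beta=A_0\dots A_nA_{n+1}/\!\sim$ for some $A_i\in{\cal P}$. For $B\in{\cal P}$, the vertex $B/\!\sim$ is denoted $B$. *)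

(* The real line is an arbitrary
   realType R (all realTypes are isomorphic to the reals). *)
From HB Require Import structures.
From mathcomp Require Import all_boot all_order all_algebra.
From mathcomp Require Import all_classical all_reals.
From mathcomp Require Import topology normedtype.
Set Implicit Arguments.
Unset Strict Implicit.
Unset Printing Implicit Defensive.
Import Order.TTheory GRing.Theory Num.Theory numFieldNormedType.Exports.
Local Open Scope classical_set_scope.
Local Open Scope ring_scope.

Section LiftedGraphs.
Variable R : realType.

Section Topo.
Variable T : topologicalType.

Definition embedding_on (A : set R) (g : R -> T) : Prop :=
  [/\ {within A, continuous g},
      {in A &, injective g} &
      forall U : set R, open U ->
        exists2 V : set T, open V & g @` (U `&` A) = V `&` (g @` A)].

Definition arc (g : R -> T) : Prop := embedding_on `[0, 1] g.

Definition hausdorff_subspace (G : set T) : Prop :=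
  forall x y, G x -> G y -> x <> y ->
    exists U V : set T, [/\ open U, open V, U x, V y & U `&` V `&` G = set0].

Definition finite_graph (G : set T) : Prop :=
  [/\ G !=set0, connected G, hausdorff_subspace G &
  exists (n : nat) (a : 'I_n -> R -> T),
    [/\ forall i, arc (a i),
        G = \bigcup_(i in [set: 'I_n]) (a i @` `[0, 1]) &
        forall i j, i != j ->
          (a i @` `[0, 1]) `&` (a j @` `[0, 1]) `<=`
            ([set a i 0; a i 1] `&` [set a j 0; a j 1])]].

End Topo.

Variable T : topologicalType.
Variables (h : R -> T) (tau tau' : T -> T).

Definition comp_out (x : T) : set T := connected_component (~` range h) x.

(* Definition of lifted graph.  tau' is the (necessarily unique) inverse of
   the homeomorphism tau. *)
Definition lifted_graph : Prop :=
  [/\ connected [set: T] /\ embedding_on setT h,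
      [/\ cancel tau tau', cancel tau' tau, continuous tau & continuous tau'],
      (forall x : R, tau (h x) = h (x + 1)),
      (forall x : T, ~ range h x ->
         finite_graph (closure (comp_out x)) /\
         exists y : R, closure (comp_out x) `&` range h = [set h y]) &
      finite_set [set C : set T | exists x, ~ range h x /\ C = comp_out x /\
                   closure C `&` (h @` `[0, 1]) !=set0]].

(* x + m := tau^m (x) *)
Definition shift (m : int) (x : T) : T :=
  match m with
  | Posz n => iter n tau x
  | Negz n => iter n.+1 tau' x
  end.

Definition shift_set (A : set T) (m : int) : set T := shift m @` A.
Definition shiftZ (A : set T) : set T := \bigcup_(m in [set: int]) shift_set A m.

(* r_R(x) = y  (retraction onto the real line) *)
Definition rR_rel (x : T) (y : R) : Prop :=
  h y = x \/ (~ range h x /\ closure (comp_out x) (h y)).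

Definition rR_pre01 : set T := [set x | exists2 y, rR_rel x y & 0 <= y < 1].

Variable F : T -> T.

Definition degree_one : Prop := forall x, F (tau x) = tau (F x).

Definition TR : set T :=
  closure (\bigcup_(n in [set: nat]) (iter n F @` range h)).

Definition Xset : set T := closure (~` TR) `&` rR_pre01.

(* Branches: for i in the finite type L, X^i = b i ([0,1]), b i an arc with
   min X^i = b i 0.  The order on X^i is the one transported from [0,1]. *)
Variables (L : finType) (b : L -> R -> T).

Definition branch (i : L) : set T := b i @` `[0, 1].

Definition sun_like : Prop :=
  [/\ forall i, arc (b i),
      (forall i j, i != j -> branch i `&` branch j = set0),
      (forall i, branch i `&` TR = [set b i 0]) &
      (~` TR) `&` rR_pre01 = \bigcup_(i in [set: L]) (b i @` `]0, 1])].

Definition le_br (i : L) (x y : T) : Prop :=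
  exists s t : R, [/\ s \in `[0, 1], t \in `[0, 1], b i s = x, b i t = y & s <= t].

Definition rj (j : L) (x : T) : T := if `[< branch j x >] then x else b j 0.

Definition br_interval (i : L) (s t : R) : set T := b i @` `[s, t].

Definition is_br_interval (i : L) (I : set T) : Prop :=
  exists s t : R, [/\ 0 <= s, s <= t, t <= 1 & I = br_interval i s t].

(* I (a nonempty compact interval of X^i) positively F^n-covers J + p, where
   J = b j ([s,t]) is a nonempty compact interval of X^j (n >= 1). *)
Definition pcovers (n : nat) (i : L) (I : set T) (j : L) (s t : R) (p : int) : Prop :=
  [/\ (0 < n)%N /\ is_br_interval i I, 0 <= s, s <= t, t <= 1 &
      exists x y, [/\ I x, I y, le_br i x y,
        le_br j (rj j (shift (- p) (iter n F x))) (b j s) &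
        le_br j (b j t) (rj j (shift (- p) (iter n F y)))]].

(* X^i_k (k : 'I_(N i), 0-based; the paper's index k+1) is
   b i ([s i k, t i k]). *)
Variables (N : L -> nat) (s t : forall i : L, 'I_(N i) -> R).
Definition pidx := {i : L & 'I_(N i)}.
Variables (ell : pidx -> L) (pp : pidx -> int).

Definition cell (A : pidx) : set T := br_interval (tag A) (s (tagged A)) (t (tagged A)).
Definition mkp (i : L) (k : 'I_(N i)) : pidx := Tagged (fun i => 'I_(N i)) k.

Definition basic_partition : Prop :=
  [/\ (forall i (k : 'I_(N i)), 0 <= s k /\ s k <= t k /\ t k <= 1),
      (forall i (k k' : 'I_(N i)), (k < k')%N -> t k < s k'),
      (forall A : pidx, F @` cell A `<=`
          shift_set (branch (ell A)) (pp A) `|` interior TR),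
      (forall A : pidx, F (b (tag A) (s (tagged A))) = shift (pp A) (b (ell A) 0)) &
      (F @` (Xset `\` \bigcup_(A in [set: pidx]) cell A)) `&` shiftZ Xset = set0].

(* <A_0 ... A_n> for the word w = [:: A_0; ...; A_n] *)
Definition bracket (w : seq pidx) : set T :=
  [set z | exists x, (forall (i : nat) (A : pidx), onth w i = Some A ->
                        shiftZ (cell A) (iter i F x))
                     /\ z = iter (size w).-1 F x] `&` Xset.

(* the relation ~ on (nonempty) words; n = size w - 1, m = size v - 1 *)
Definition wsim (w v : seq pidx) : Prop :=
  w <> [::] /\ v <> [::] /\
  exists k : nat, [/\ (k <= (size w).-1)%N, (k <= (size v).-1)%N,
    (forall i, (i <= k)%N -> onth w ((size w).-1 - i) = onth v ((size v).-1 - i)) &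
    exists A : pidx, [/\ onth w ((size w).-1 - k) = Some A,
                         onth v ((size v).-1 - k) = Some A,
                         bracket (take ((size w).-1 - k).+1 w) = cell A &
                         bracket (take ((size v).-1 - k).+1 v) = cell A]].

Definition wclass (w : seq pidx) : set (seq pidx) := wsim w.

Definition is_vertex (a : set (seq pidx)) : Prop :=
  exists2 w : seq pidx, w <> [::] /\ bracket w !=set0 & a = wclass w.

Definition arrow (a c : set (seq pidx)) : Prop :=
  [/\ is_vertex a, is_vertex c &
      exists (w : seq pidx) (A : pidx), w <> [::] /\ a = wclass w /\ c = wclass (rcons w A)].

Definition vtx (B : pidx) : set (seq pidx) := wclass [:: B].

End LiftedGraphs.

From Pilot Require Import Defs.
From HB Require Import structures.
From mathcomp Require Import all_boot all_order all_algebra.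
From mathcomp Require Import all_classical all_reals.
From mathcomp Require Import topology normedtype.
From mathcomp Require Import zify lra.
Import Order.TTheory GRing.Theory Num.Theory numFieldNormedType.Exports.
Local Open Scope classical_set_scope.
Local Open Scope ring_scope.

Unset Printing Implicit Defensive.

(* Every nonempty bracket <A_0 ... A_n> is an initial piece [min A_n, u] of the
   cell A_n.  Indeed, F maps such a piece onto a compact connected set K that
   starts at min X^l + p (l = ell A_n, p = pp A_n) and lies in
   (X^l + p) \/ Int T_R; as X^l meets T_R only at its minimum, K cannot leave
   X^l + p except through T_R, so K meets X^l + p in an initial segment.  Hence
   once F<A_0 ... A_n> reaches the cell X^l_k, it contains every X^l_j + p with
   j < k: <A_0 ... A_n> positively covers X^l_j + p, and
   <A_0 ... A_n X^l_j> = X^l_j, so that A_0 ... A_n X^l_j ~ X^l_j. *)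

Section Shift.
Context {T : topologicalType} {tau tau' : T -> T}.
Hypotheses (tauK : cancel tau tau') (tau'K : cancel tau' tau).
Local Notation sh := (Defs.shift tau tau').

Lemma shiftS m x : sh (m + 1) x = tau (sh m x).
Proof.
case: m => [n|[|n]].
- by rewrite (_ : _ + _ = Posz n.+1) //; lia.
- by rewrite (_ : _ + _ = 0) //=; lia.
- by rewrite (_ : _ + _ = Negz n) //=; lia.
Qed.

Lemma shiftB1 m x : sh (m - 1) x = tau' (sh m x).
Proof.
case: m => [[|n]|n].
- by rewrite (_ : _ - _ = Negz 0) //=; lia.
- by rewrite (_ : _ - _ = Posz n) /= ?tauK //; lia.
- by rewrite (_ : _ - _ = Negz n.+1) //=; lia.
Qed.

Lemma shiftD m1 m2 x : sh (m1 + m2) x = sh m1 (sh m2 x).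
Proof.
elim/int_ind: m1 x => [|n IH|n IH] x; first by rewrite add0r.
- by rewrite -addn1 PoszD -addrAC shiftS IH shiftS.
- by rewrite -addn1 PoszD opprD -addrAC shiftB1 IH shiftB1.
Qed.

Lemma shiftK m : cancel (sh m) (sh (- m)).
Proof. by move=> x; rewrite -shiftD addNr. Qed.

Lemma shiftKV m : cancel (sh (- m)) (sh m).
Proof. by move=> x; rewrite -shiftD addrN. Qed.

Lemma shift_inj m : injective (sh m).
Proof. exact: can_inj (shiftK m). Qed.

Lemma shift_comm {f : T -> T} : (forall x, f (tau x) = tau (f x)) ->
  forall m x, f (sh m x) = sh m (f x).
Proof.
move=> ftau; have ftau' x : f (tau' x) = tau' (f x).
  by rewrite -{2}(tau'K x) ftau tauK.
elim/int_ind => [|n IH|n IH] x //.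
- by rewrite -addn1 PoszD shiftS ftau IH shiftS.
- by rewrite -addn1 PoszD opprD shiftB1 ftau' IH shiftB1.
Qed.

Lemma iter_shift {f : T -> T} : (forall x, f (tau x) = tau (f x)) ->
  forall n m x, iter n f (sh m x) = sh m (iter n f x).
Proof. by move=> ftau; elim=> //= n IH m x; rewrite IH shift_comm. Qed.

Lemma shift_continuous : continuous tau -> continuous tau' ->
  forall m, continuous (sh m).
Proof.
move=> tauc tau'c; elim/int_ind => [|n IH|n IH]; first by move=> x; exact: cvg_id.
- have -> : sh n.+1 = tau \o sh n.
    by apply: funext => x; rewrite -addn1 PoszD shiftS.
  by move=> x; apply: continuous_comp; [exact: IH|exact: tauc].
- have -> : sh (- n.+1%:Z) = tau' \o sh (- n%:Z).
    by apply: funext => x; rewrite -addn1 PoszD opprD shiftB1.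
  by move=> x; apply: continuous_comp; [exact: IH|exact: tau'c].
Qed.

Lemma shift_embedding {R : realType} {h : R -> T} :
  (forall r, tau (h r) = h (r + 1)) -> forall m r, sh m (h r) = h (r + m%:~R).
Proof.
move=> htau; elim/int_ind => [|n IH|n IH] r; first by rewrite addr0.
- by rewrite -addn1 PoszD shiftS IH htau intrD addrA.
- rewrite -addn1 PoszD opprD shiftB1 IH intrB.
  by rewrite -[r + _](addrNK 1) -htau tauK addrA.
Qed.

End Shift.

Lemma image_closure_subset {S U : topologicalType} {f : S -> U} (A : set S) :
  continuous f -> f @` closure A `<=` closure (f @` A).
Proof.
move=> fc _ [x clx <-] B nB.
have [y [Ay By]] := clx _ (fc x _ nB).
by exists (f y); split => //; exists y.
Qed.

Lemma itvccP {R : realType} (a c u : R) : `[a, c]%classic u <-> a <= u <= c.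
Proof. by rewrite /= in_itv. Qed.

Lemma interval_connected {R : realType} (i : interval R) : connected [set` i].
Proof. exact/connected_intervalP/interval_is_interval. Qed.

Lemma connected_open_cover {S : topologicalType} {K O1 O2 : set S} :
  connected K -> open O1 -> open O2 -> K `<=` O1 `|` O2 ->
  K `&` O1 `&` O2 = set0 -> K `&` O1 !=set0 -> K `<=` O1.
Proof.
move=> cK oO1 oO2 KO O12 KO1; suff <- : K `&` O1 = K by move=> z [].
apply: cK => //; first by exists O1.
exists (~` O2); first exact: open_closedC.
apply/seteqP; split => z [Kz Oz]; split => //.
  by move=> O2z; have : (K `&` O1 `&` O2) z by []; rewrite O12.
by case: (KO z Kz) => // /Oz.
Qed.

Lemma compact_sup_cluster {R : realType} {S : topologicalType}
    {K : set S} {f : R -> S} {D : set R} :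
  compact K -> has_sup D -> f @` D `<=` K ->
  exists2 q, K q & forall e U, 0 < e -> nbhs q U ->
    exists v, [/\ D v, sup D - e < v & U (f v)].
Proof.
move=> cK hs DK.
pose G := filter_from [set e : R | 0 < e]
  (fun e => f @` [set v | D v /\ sup D - e < v]).
have GF : ProperFilter G.
  apply: filter_from_proper; last first.
    by move=> e e0; have [v Dv hv] := sup_adherent e0 hs; exists (f v), v.
  apply: filter_from_filter; first by exists 1 => /=; lra.
  move=> e1 e2 e10 e20; exists (Num.min e1 e2); first by rewrite /= lt_min; apply/andP.
  move=> _ [v [Dv hv] <-].
  have m1 : Num.min e1 e2 <= e1 by rewrite ge_min lexx.
  have m2 : Num.min e1 e2 <= e2 by rewrite ge_min lexx orbT.
  by split; exists v => //; split => //; lra.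
have GK : G K by exists 1 => /=; [lra|move=> _ [v [Dv _] <-]; apply: DK; exists v].
have [q [Kq clq]] := cK G GF GK.
exists q => // e U e0 qU.
have [_ [[v [Dv hv] <-] Uv]] := clq _ _ (ex_intro2 _ _ e e0 (@subset_refl _ _)) qU.
by exists v.
Qed.

Lemma intr_eq0_small (R : numDomainType) (m : int) :
  -1 < m%:~R :> R -> m%:~R < 1 :> R -> m = 0.
Proof.
move=> m_gt m_lt.
have : ((-1)%:~R : R) < m%:~R by [].
have : (m%:~R : R) < (1%:Z)%:~R by [].
by rewrite !ltr_int; lia.
Qed.

Lemma onth_rcons {X : Type} (w : seq X) x i :
  onth (rcons w x) i = if (i < size w)%N then onth w i
                       else if i == size w then Some x else None.
Proof.
rewrite -cats1 onth_cat; case: ltnP => // hi.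
have [->|ne] := eqVneq i (size w); first by rewrite subnn.
by rewrite onth_default //=; lia.
Qed.

Lemma onth_rcons_some {X : Type} (w : seq X) x y i :
  onth w i = Some y -> onth (rcons w x) i = Some y.
Proof.
move=> e; have : (i < size w)%N by rewrite -onthTE e.
by rewrite onth_rcons => ->.
Qed.

Lemma take_onth {X : Type} {w : seq X} {n x} : onth w n = Some x ->
  take n.+1 w = rcons (take n w) x.
Proof.
move=> e; have hn : (n < size w)%N by rewrite -onthTE e.
by rewrite (take_nth x hn) (onth_nth x _ _ _ e).
Qed.

Section SunLikeMap.
Context {R : realType} {T : topologicalType}
  {h : R -> T} {tau tau' : T -> T} {F : T -> T}
  {L : finType} {b : L -> R -> T}
  {N : L -> nat} {s t : forall i : L, 'I_(N i) -> R}
  {ell : pidx N -> L} {pp : pidx N -> int}.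
Hypothesis HLG : lifted_graph h tau tau'.
Hypothesis HFc : continuous F.
Hypothesis HD : degree_one tau F.
Hypothesis HS : sun_like h F b.
Hypothesis HB : basic_partition h tau tau' F b s t ell pp.

Local Notation sh := (Defs.shift tau tau').
Local Notation TRs := (TR h F).
Local Notation X := (Xset h F).
Local Notation cellA := (cell b s t).
Local Notation shZ := (shiftZ tau tau').
Local Notation brk := (bracket h tau tau' F b s t).
Local Notation wcl := (wclass h tau tau' F b s t).

Let tauK : cancel tau tau'. Proof. by case: HLG => _ []. Qed.
Let tau'K : cancel tau' tau. Proof. by case: HLG => _ []. Qed.
Let tauc : continuous tau. Proof. by case: HLG => _ []. Qed.
Let tau'c : continuous tau'. Proof. by case: HLG => _ []. Qed.
Let htau : forall x : R, tau (h x) = h (x + 1). Proof. by case: HLG. Qed.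
Let hinj : injective h.
Proof. by case: HLG => -[_ [_ hi _]] _ _ _ _ x y; apply: hi; rewrite inE. Qed.
Let comp_out_range x : ~ range h x ->
  exists y, closure (comp_out h x) `&` range h = [set h y].
Proof. by case: HLG => _ _ _ H _ /H []. Qed.

Local Notation shK := (shiftK tauK tau'K).
Local Notation shKV := (shiftKV tauK tau'K).
Local Notation shD := (shiftD tauK tau'K).
Local Notation sh_inj := (shift_inj tauK tau'K).
Local Notation shF := (shift_comm tauK tau'K HD).
Local Notation iter_shF := (iter_shift tauK tau'K HD).
Local Notation sh_cont := (shift_continuous tauK tau'K tauc tau'c).
Local Notation sh_h := (shift_embedding tauK tau'K htau).

Lemma range_TR : range h `<=` TRs.
Proof.
move=> _ [r _ <-]; apply: subset_closure; exists 0%N => //.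
by exists (h r) => //; exists r.
Qed.

Lemma TR_shift m x : TRs x -> TRs (sh m x).
Proof.
move=> Tx; have : (sh m @` TRs) (sh m x) by exists x.
move/(image_closure_subset _ (sh_cont m)); apply: closureS.
move=> _ [y [n _ [_ [r _ <-] <-]] <-].
rewrite -iter_shF sh_h; exists n => //.
by exists (h (r + m%:~R)) => //; exists (r + m%:~R).
Qed.

Lemma X_shift_notin_interior_TR m z : X z -> ~ TRs° (sh m z).
Proof.
move=> [clz _] Iz.
have nb : nbhs z (sh m @^-1` TRs°).
  by apply: (sh_cont m z); apply: nbhs_interior.
have [w [nTw /= Iw]] := clz _ nb.
by apply: nTw; rewrite -(shK m w); apply: TR_shift; exact: interior_subset.
Qed.

Lemma notin_range_shift m x : ~ range h x -> ~ range h (sh m x).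
Proof.
move=> nx [r _ e]; apply: nx; exists (r + (- m)%:~R) => //.
by rewrite -sh_h e shK.
Qed.

Lemma comp_out_shift m x : ~ range h x ->
  sh m @` comp_out h x `<=` comp_out h (sh m x).
Proof.
move=> nx; apply: connected_component_max.
- by exists x => //; apply: connected_component_refl.
- by move=> _ [y /connected_component_sub ny <-]; exact: notin_range_shift.
- apply: connected_continuous_connected; first exact: component_connected.
  exact/continuous_subspaceT/sh_cont.
Qed.

Lemma rR_rel_shift m x y : rR_rel h x y -> rR_rel h (sh m x) (y + m%:~R).
Proof.
case=> [<-|[nx clx]]; first by left; rewrite sh_h.
right; split; first exact: notin_range_shift.
rewrite -(sh_h m y); apply: (closureS (comp_out_shift m x nx)).
by apply: (image_closure_subset _ (sh_cont m)); exists (h y).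
Qed.

Lemma rR_rel_fun x y1 y2 : rR_rel h x y1 -> rR_rel h x y2 -> y1 = y2.
Proof.
case=> [<-|[nx c1]].
  by case=> [/hinj //|[nx _]]; exfalso; apply: nx; exists y1.
case=> [e|[_ c2]]; first by exfalso; apply: nx; exists y2.
have [y0 E] := comp_out_range x nx.
have : (closure (comp_out h x) `&` range h) (h y1) by split => //; exists y1.
have : (closure (comp_out h x) `&` range h) (h y2) by split => //; exists y2.
by rewrite E => /= /hinj -> /hinj ->.
Qed.

Lemma X_shift_eq0 m x : X x -> X (sh m x) -> m = 0.
Proof.
move=> [_ [y rx /andP[y0 y1]]] [_ [y' rx' /andP[y0' y1']]].
have e := rR_rel_fun _ _ _ rx' (rR_rel_shift m _ _ rx).
by apply: (intr_eq0_small R); rewrite -[m%:~R](addKr y) -e; lra.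
Qed.

Lemma shiftZP S x : shZ S x <-> exists m c, S c /\ sh m c = x.
Proof.
split; first by move=> [m _ [c Sc <-]]; exists m, c.
by move=> [m [c [Sc <-]]]; exists m => //; exists c.
Qed.

Lemma shiftZ_shift S m x : shZ S x -> shZ S (sh m x).
Proof.
move/shiftZP => [m' [c [Sc <-]]]; apply/shiftZP; exists (m + m'), c.
by rewrite shD.
Qed.

Lemma shiftZ_self S x : S x -> shZ S x.
Proof. by move=> Sx; apply/shiftZP; exists 0, x. Qed.

Lemma shiftZ_X {S z} : S `<=` X -> shZ S z -> X z -> S z.
Proof.
move=> SX /shiftZP [m [c [Sc <-]]] Xz.
by have m0 := X_shift_eq0 m c (SX c Sc) Xz; subst m.
Qed.

Let branch_cont i : {within `[0, 1], continuous (b i)}.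
Proof. by case: HS => /(_ i) []. Qed.
Let branch_inj i u v : `[0, 1]%classic u -> `[0, 1]%classic v -> b i u = b i v -> u = v.
Proof. by case: HS => /(_ i) [] _ bi _ _ _ _ /mem_set ? /mem_set ?; apply: bi. Qed.
Let branch_open i (U : set R) : open U ->
  exists2 V : set T, open V & b i @` (U `&` `[0, 1]%classic) = V `&` branch b i.
Proof. by case: HS => /(_ i) [] _ _ bo _ _ _; apply: bo. Qed.
Let branch_disj i j : i != j -> branch b i `&` branch b j = set0.
Proof. by case: HS => _ H _ _; apply: H. Qed.
Let branchI_TR i : branch b i `&` TRs = [set b i 0].
Proof. by case: HS => _ _ H _; apply: H. Qed.
Let X_branches : ~` TRs `&` rR_pre01 h = \bigcup_(i in [set: L]) (b i @` `]0, 1]%classic).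
Proof. by case: HS => _ _ _ H. Qed.

Lemma branch_notin_TR i v : 0 < v <= 1 -> ~ TRs (b i v).
Proof.
move=> /andP[v0 v1] Tv.
have : (branch b i `&` TRs) (b i v) by split => //; exists v; rewrite //= in_itv /=; lra.
rewrite branchI_TR => /= /branch_inj; rewrite /= !in_itv /=; lra.
Qed.

Lemma branch0_TR i : TRs (b i 0).
Proof. by have : [set b i 0] (b i 0) by []; rewrite -branchI_TR => -[]. Qed.

Lemma branch_rR_pre01 i v : 0 < v <= 1 -> rR_pre01 h (b i v).
Proof.
move=> hv.
have : (\bigcup_(i in [set: L]) (b i @` `]0, 1]%classic)) (b i v).
  by exists i => //; exists v => //=; rewrite in_itv.
by rewrite -X_branches => -[].
Qed.

Lemma branch0_closure i : closure (b i @` `]0, 1]%classic) (b i 0).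
Proof.
move=> B nB.
have : within `[0, 1]%classic (nbhs (0:R)) (b i @^-1` B).
  by rewrite nbhs_subspace_in; [exact: branch_cont|rewrite /= in_itv /=; lra].
move=> /nbhs_ballP [e /= e0 He].
pose u := Num.min (e / 2) 1.
have u0 : 0 < u by rewrite lt_min; apply/andP; split => //; lra.
have u1 : u <= 1 by rewrite ge_min lexx orbT.
have ue : u < e by rewrite gt_min; apply/orP; left; lra.
exists (b i u); split; first by exists u => //=; rewrite in_itv /=; apply/andP.
apply: He; last by rewrite /= in_itv /=; lra.
by rewrite -ball_normE /= sub0r normrN gtr0_norm.
Qed.

Lemma branch_oc_comp_out i : b i @` `]0, 1]%classic `<=` comp_out h (b i 1).
Proof.
have oc_cc : `]0, 1]%classic `<=` (`[0, 1]%classic : set R).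
  by move=> u; rewrite /= !in_itv /= => /andP[/ltW -> ->].
apply: connected_component_max.
- by exists 1 => //=; rewrite in_itv /= ltr01 lexx.
- move=> _ [u /= hu <-] r; apply: (branch_notin_TR i u); last exact: range_TR.
  by rewrite in_itv /= in hu.
- apply: connected_continuous_connected (interval_connected _) _.
  exact: continuous_subspaceW oc_cc (branch_cont i).
Qed.

(* b i 0 lies either on the real line or in the component of b i 1; in both
   cases it retracts to the same point of [0, 1) as b i 1. *)
Lemma branch0_rR_pre01 i : rR_pre01 h (b i 0).
Proof.
have h1 : (0 : R) < 1 <= (1 : R) by apply/andP; split; lra.
have [y rb1 y01] := branch_rR_pre01 i 1 h1.
exists y => //.
have nb1 : ~ range h (b i 1) by move=> r; apply: (branch_notin_TR i 1 h1); apply: range_TR.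
case: rb1 => [e|[_ cl1]]; first by exfalso; apply: nb1; exists y.
have clC0 := closureS (branch_oc_comp_out i) (branch0_closure i).
have [[y' _ e0]|n0] := pselect (range h (b i 0)).
  left; have [y0 E] := comp_out_range _ nb1.
  have : (closure (comp_out h (b i 1)) `&` range h) (h y) by split => //; exists y.
  have : (closure (comp_out h (b i 1)) `&` range h) (h y') by split => //; rewrite e0.
  by rewrite E => /= e1 e2; rewrite e2 -e1.
right; split => //.
have sb : branch b i `<=` comp_out h (b i 0).
  apply: connected_component_max.
  - by exists 0 => //=; rewrite in_itv /= lexx ler01.
  - move=> _ [u /= + <-]; rewrite in_itv /= => /andP[u0 u1].
    have [->|nu0] := eqVneq u 0; first exact: n0.
    move=> r; apply: (branch_notin_TR i u); last exact: range_TR.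
    by rewrite u1 andbT lt_neqAle eq_sym nu0.
  - exact: connected_continuous_connected (interval_connected _) (branch_cont i).
have cc01 : comp_out h (b i 0) (b i 1) by apply: sb; exists 1 => //=; rewrite in_itv /= ler01 lexx.
apply: (closureS _ cl1) => z Cz.
exact: connected_component_trans cc01 Cz.
Qed.

Lemma branch_X i : branch b i `<=` X.
Proof.
move=> _ [v /= + <-]; rewrite in_itv /= => /andP[v0 v1].
have [->|nv0] := eqVneq v 0; last first.
  have hv : 0 < v <= 1 by rewrite v1 andbT lt_neqAle eq_sym nv0.
  by split; [apply: subset_closure; apply: branch_notin_TR|apply: branch_rR_pre01].
split; last exact: branch0_rR_pre01.
apply: (closureS _ (branch0_closure i)).
by move=> _ [u /= hu <-]; apply: branch_notin_TR; rewrite in_itv /= in hu.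
Qed.

Lemma le_br_param i x y : 0 <= x -> x <= y -> y <= 1 -> le_br b i (b i x) (b i y).
Proof. by move=> x0 xy y1; exists x, y; rewrite !in_itv /= x0 y1; split => //; lra. Qed.

Lemma rj_branch i x : 0 <= x <= 1 -> rj b i (b i x) = b i x.
Proof. by move=> x01; rewrite /rj asboolT //; exists x => //; apply/itvccP. Qed.

Lemma branch_open_mem j (U : set R) (V : set T) r :
  b j @` (U `&` `[0, 1]%classic) = V `&` branch b j -> `[0, 1]%classic r ->
  V (b j r) <-> U r.
Proof.
move=> E r01; split => [Vr|Ur].
  have : (V `&` branch b j) (b j r) by split => //; exists r.
  by rewrite -E => -[r' [Ur' r'01] e]; rewrite -(branch_inj j r' r r'01 r01 e).
have : (b j @` (U `&` `[0, 1]%classic)) (b j r) by exists r.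
by rewrite E => -[].
Qed.

Let cell_bounds i k : 0 <= s i k /\ s i k <= t i k /\ t i k <= 1.
Proof. by case: HB => H _ _ _ _; apply: H. Qed.
Let cell_sorted i (k k' : 'I_(N i)) : (k < k')%N -> t i k < s i k'.
Proof. by case: HB => _ H _ _ _; apply: H. Qed.
Let cell_image A :
  F @` cellA A `<=` shift_set tau tau' (branch b (ell A)) (pp A) `|` TRs°.
Proof. by case: HB => _ _ H _ _; apply: H. Qed.
Let cell_min_image A : F (b (tag A) (s (tag A) (tagged A))) = sh (pp A) (b (ell A) 0).
Proof. by case: HB => _ _ _ H _; apply: H. Qed.

Lemma cell_branch A : cellA A `<=` branch b (tag A).
Proof.
move=> _ [u /= + <-]; rewrite in_itv /= => /andP[u1 u2]; exists u => //=.
by have := cell_bounds (tag A) (tagged A); rewrite in_itv /=; lra.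
Qed.

Lemma cell_X A : cellA A `<=` X.
Proof. by move=> z /cell_branch; apply: branch_X. Qed.

Lemma cell_image_X A y m : cellA A y -> X (sh m (F y)) ->
  m = - pp A /\ branch b (ell A) (sh m (F y)).
Proof.
move=> Ay XFy.
have : (F @` cellA A) (F y) by exists y.
move/cell_image => [[e eb ee]|IFy]; last first.
  by have := X_shift_notin_interior_TR (- m) _ XFy; rewrite shK.
have e_eq : sh m (F y) = sh (m + pp A) e by rewrite -ee shD.
have mp : m + pp A = 0.
  by apply: X_shift_eq0 (branch_X _ _ eb) _; rewrite -e_eq.
by rewrite e_eq mp; split => //; apply/eqP; rewrite -addr_eq0 mp.
Qed.

Lemma bracket1 A : brk [:: A] = cellA A.
Proof.
apply/seteqP; split.
  move=> z [[x [Hx ->]] Xz] /=.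
  exact: shiftZ_X (cell_X A) (Hx 0%N A erefl) Xz.
move=> z Az; split; last exact: cell_X Az.
by exists z; split => //= i A' /onth1P [-> <-]; exact: shiftZ_self.
Qed.

Lemma bracket_sub_cell {w A} : brk (rcons w A) `<=` cellA A.
Proof.
move=> z [[x [Hx ->]] Xz]; apply: shiftZ_X (cell_X A) _ Xz.
by apply: Hx; rewrite size_rcons /= onth_rcons ltnn eqxx.
Qed.

Lemma bracket_rcons2 w A B : brk (rcons (rcons w A) B) =
  [set c | cellA B c /\ exists2 y, brk (rcons w A) y & F y = sh (pp A) c].
Proof.
apply/seteqP; split => [z [[x0 [Hx ->]] Xz]|c [Bc [y [[x0 [Hx ->]] Xy] Fy]]].
  rewrite !size_rcons /= in Xz *.
  have [m [c0 [Ac0 ec0]]] : exists m c0, cellA A c0 /\ sh m c0 = iter (size w) F x0.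
    by apply/shiftZP/Hx; rewrite !onth_rcons size_rcons ltnS leqnn ltnn eqxx.
  split.
    apply: shiftZ_X (cell_X B) _ Xz; apply: (Hx (size w).+1).
    by rewrite !onth_rcons size_rcons ltnn eqxx.
  exists c0.
    split; last exact: cell_X Ac0.
    exists (sh (- m) x0); split; last by rewrite size_rcons /= iter_shF -ec0 shK.
    move=> i A' hi; rewrite iter_shF; apply/shiftZ_shift/Hx.
    exact: onth_rcons_some.
  rewrite -ec0 /= shF in Xz *.
  by have [-> _] := cell_image_X A c0 m Ac0 Xz; rewrite shKV.
split; last exact: cell_X Bc.
rewrite size_rcons /= in Fy.
have key : iter (size (rcons w A)) F (sh (- pp A) x0) = c.
  by rewrite size_rcons /= iter_shF shF Fy shK.
exists (sh (- pp A) x0); split; last by rewrite size_rcons key.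
move=> i A'; rewrite onth_rcons; case: ifP => hi.
  by move=> hA; rewrite iter_shF; apply/shiftZ_shift/Hx.
by case: eqP => // -> [<-]; rewrite key; apply: shiftZ_self.
Qed.

Lemma bracket_rcons_cat r w v A : brk (rcons w A) = brk (rcons v A) ->
  brk (rcons w A ++ r) = brk (rcons v A ++ r).
Proof.
elim: r w v A => [|B r IH] w v A e; first by rewrite !cats0.
by rewrite -!cat_rcons; apply: IH; rewrite !bracket_rcons2 e.
Qed.

Lemma wsim_bracket {w v} : wsim h tau tau' F b s t w v -> brk w = brk v.
Proof.
move=> [wn [vn [k [kw kv agr [A [eA1 eA2 b1 b2]]]]]].
set iw := ((size w).-1 - k)%N in eA1 b1.
set iv := ((size v).-1 - k)%N in eA2 b2.
have hd : drop iw.+1 w = drop iv.+1 v.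
  apply: (@eq_from_nth _ A); first by rewrite !size_drop /iw /iv; lia.
  move=> i; rewrite size_drop /iw => hi.
  rewrite !nth_drop -!odflt_onth.
  have := agr (k.-1 - i)%N; rewrite /iv.
  have -> : ((size w).-1 - (k.-1 - i))%N = (((size w).-1 - k).+1 + i)%N by lia.
  have -> : ((size v).-1 - (k.-1 - i))%N = (((size v).-1 - k).+1 + i)%N by lia.
  by move=> ->//; lia.
rewrite -(cat_take_drop iw.+1 w) -(cat_take_drop iv.+1 v) hd.
rewrite (take_onth eA1) (take_onth eA2); apply: bracket_rcons_cat.
by rewrite -(take_onth eA1) -(take_onth eA2) b1 b2.
Qed.

Lemma wsim_refl v : v <> [::] -> wsim h tau tau' F b s t v v.
Proof.
case: v => // A0 v' _; do 2!split=> //.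
exists (size (A0 :: v')).-1; split => //.
by exists A0; rewrite subnn; split => //=; rewrite take0 bracket1.
Qed.

Lemma wclass_cell {w B} : brk (rcons w B) = cellA B -> wcl (rcons w B) = wcl [:: B].
Proof.
move=> e; apply: funext => u; apply: propext; rewrite /wclass; split.
  move=> hw; have eb := wsim_bracket hw.
  move: hw => [_ [un [k [_ _ agr _]]]].
  have := agr 0%N (leq0n _); rewrite !subn0 size_rcons /= onth_rcons ltnn eqxx => eu.
  do 2!split => //; exists 0%N; split => //.
  - by move=> i; rewrite leqn0 => /eqP ->; rewrite !subn0.
  - exists B; rewrite !subn0; split => //; first by rewrite /= bracket1.
    have su : size u = (size u).-1.+1 by case: (u) un.
    by rewrite -su take_size -eb e.
move=> [_ [un [k [k0 _ agr [A [eA1 eA2 b1 b2]]]]]].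
move: k0; rewrite leqn0 => /eqP k0; subst k.
move: eA1 => /= [eAB]; subst A.
rewrite subn0 in eA2 b2.
have su : size u = (size u).-1.+1 by case: (u) un.
rewrite -su take_size in b2.
have last_B : onth (rcons w B) (size (rcons w B)).-1 = Some B.
  by rewrite size_rcons /= onth_rcons ltnn eqxx.
split; first by case: (w).
split => //; exists 0%N; split => //.
- by move=> i; rewrite leqn0 => /eqP ->; rewrite !subn0 last_B eA2.
- exists B; rewrite !subn0 last_B -su take_size; split => //.
  by rewrite size_rcons /= -(size_rcons w B) take_size.
Qed.

Section ImageOfInitialSegment.
Context {A : pidx N} {u : R}.
Hypothesis hu : s (tag A) (tagged A) <= u <= t (tag A) (tagged A).
Local Notation i := (tag A).
Local Notation j := (ell A).
Local Notation p := (pp A).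
Local Notation sA := (s (tag A) (tagged A)).

Let I := b i @` `[sA, u]%classic.
Let K := [set z | exists2 y, I y & F y = sh p z].
Let D := [set v : R | 0 <= v <= 1 /\ K (b j v)].
Let Q := [set z | TRs° (sh p z)].

Let param_01 : `[sA, u]%classic `<=` (`[0, 1]%classic : set R).
Proof.
have [? [? ?]] := cell_bounds i (tagged A); move: hu => /andP[? ?].
by move=> r /=; rewrite !in_itv /= => /andP[? ?]; apply/andP; split; lra.
Qed.

Let I_cell : I `<=` cellA A.
Proof.
have [? [? ?]] := cell_bounds i (tagged A); move: hu => /andP[? ?].
move=> _ [r /itvccP /andP[? ?] <-]; exists r => //.
by apply/itvccP/andP; split; lra.
Qed.

Let K_image : K = (sh (- p) \o F) @` I.
Proof.
apply/seteqP; split => z.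
  by move=> [y Iy e]; exists y => //=; rewrite e shK.
by move=> [y Iy <-]; exists y => //=; rewrite shKV.
Qed.

Let I_continuous : {within `[sA, u]%classic, continuous (b i)}.
Proof. exact: continuous_subspaceW param_01 (branch_cont i). Qed.

Let K_connected : connected K.
Proof.
rewrite K_image; apply: connected_continuous_connected.
  exact: connected_continuous_connected (interval_connected _) I_continuous.
by apply: continuous_subspaceT => x; apply: continuous_comp; [exact: HFc|exact: sh_cont].
Qed.

Let K_compact : compact K.
Proof.
rewrite K_image; apply: continuous_compact.
  by apply: continuous_subspaceT => x; apply: continuous_comp; [exact: HFc|exact: sh_cont].
by apply: continuous_compact; [exact: I_continuous|exact: segment_compact].
Qed.

Let Q_open : open Q.
Proof. exact: open_comp (fun x _ => sh_cont p x) (@open_interior _ _). Qed.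

Let Q_TR z : Q z -> TRs z.
Proof. by move=> /interior_subset /(TR_shift (- p)); rewrite shK. Qed.

Let K_split z : K z -> (exists2 r, `[0, 1]%classic r & z = b j r) \/ Q z.
Proof.
move=> [y Iy e]; have : (F @` cellA A) (F y) by exists y => //; apply: I_cell.
move/cell_image => [[e' [r r01 <-] ee]|Iz]; last by right; rewrite /Q /= -e.
by left; exists r => //; apply: (sh_inj p); rewrite ee e.
Qed.

Let D0 : D 0.
Proof.
split; first by rewrite lexx ler01.
exists (b i sA); last exact: cell_min_image.
have [? [? ?]] := cell_bounds i (tagged A); move: hu => /andP[? ?].
by exists sA => //=; rewrite in_itv /=; apply/andP; split; lra.
Qed.

(* Otherwise the connected set K would be split by the open sets
   b j (w, 1] \ T_R and b j [0, w) \/ Q. *)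
Let D_down v w : D v -> 0 < w -> w <= v -> D w.
Proof.
move=> [/andP[v0 v1] Kv] w0 wv.
have w01 : 0 <= w <= 1 by apply/andP; split; lra.
split => //; apply: contrapT => nKw.
have {}wv : w < v by rewrite lt_neqAle wv andbT; apply/eqP => e; subst w.
have [V oV EV] := branch_open j _ (@open_gt R w).
have [W oW EW] := branch_open j _ (@open_lt R w).
have oO1 : open (V `&` ~` TRs) by apply: openI => //; exact/closed_openC/closed_closure.
have KO : K `<=` (V `&` ~` TRs) `|` (W `|` Q).
  move=> z Kz; case: (K_split _ Kz) => [[r r01 ez]|Qz]; last by right; right.
  subst z; have r1 : r <= 1 by move: r01; rewrite /= in_itv /= => /andP[].
  have [rw|rw|rw] := ltgtP r w.
  - by right; left; apply/(branch_open_mem j _ _ r EW r01).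
  - left; split; first by apply/(branch_open_mem j _ _ r EV r01).
    by apply: (branch_notin_TR j r); apply/andP; split; lra.
  - by exfalso; apply: nKw; rewrite -rw.
have KO12 : K `&` (V `&` ~` TRs) `&` (W `|` Q) = set0.
  apply/seteqP; split => // z [[Kz [Vz nTz]] [Wz|Qz]]; last exact/nTz/Q_TR.
  case: (K_split _ Kz) => [[r r01 ez]|Qz]; last exact/nTz/Q_TR.
  rewrite ez in Vz Wz.
  move/(branch_open_mem j _ _ r EV r01): Vz; move/(branch_open_mem j _ _ r EW r01): Wz.
  by rewrite /=; lra.
have KO1 : K `&` (V `&` ~` TRs) !=set0.
  exists (b j v); split => //; split.
    by apply/(branch_open_mem j _ _ v EV); [apply/itvccP/andP; split|rewrite /=]; lra.
  by apply: (branch_notin_TR j v); apply/andP; split; lra.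
have [_ /(_ (branch0_TR j))//] :=
  connected_open_cover K_connected oO1 (openU oW Q_open) KO KO12 KO1 _ D0.2.
Qed.

(* A cluster point of b j (D `&` (sup D - e, sup D]) in the compact K is
   neither b j r with r < sup D nor in Q. *)
Let D_max : exists2 us, D us & forall v, D v -> v <= us.
Proof.
have hs : has_sup D by split; [exists 0; exact: D0|exists 1 => v [/andP[_ ?] _]].
have ub v : D v -> v <= sup D by move=> Dv; apply: sup_upper_bound.
exists (sup D) => //; apply: contrapT => nD.
have DK : b j @` D `<=` K by move=> _ [v [_ Kv] <-].
have [q Kq clq] := compact_sup_cluster K_compact hs DK.
case: (K_split _ Kq) => [[r r01 eq]|Qq].
  have Dr : D r by split; [apply/itvccP|rewrite -eq].
  have rlt : r < sup D.
    by rewrite lt_neqAle ub // andbT; apply/eqP => e; apply: nD; rewrite -e.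
  pose m := (r + sup D) / 2.
  have [W oW EW] := branch_open j _ (@open_lt R m).
  have Wq : W q by rewrite eq; apply/(branch_open_mem j _ _ r EW r01) => /=; rewrite /m; lra.
  have e0 : 0 < sup D - m by rewrite /m; lra.
  have [v [[v01 _] vm Wv]] := clq _ _ e0 (open_nbhs_nbhs (conj oW Wq)).
  by move/(branch_open_mem j _ _ v EW (proj1 (itvccP _ _ _) v01)): Wv => /=; lra.
have us0 : 0 < sup D.
  by rewrite lt_neqAle ub ?andbT //; apply/eqP => e; apply: nD; rewrite -e.
have [v [[/andP[_ v1] _] v0 Qv]] := clq _ _ us0 (open_nbhs_nbhs (conj Q_open Qq)).
by apply: (branch_notin_TR j v); [apply/andP; split; lra|exact: Q_TR].
Qed.

Lemma image_initial_segment : exists us, 0 <= us <= 1 /\ forall v, 0 <= v <= 1 ->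
  (exists2 y, I y & F y = sh p (b j v)) <-> v <= us.
Proof.
have [us [us01 Kus] umax] := D_max.
exists us; split => // v v01; split => [Kv|vus]; first exact: umax.
have [->|v0] := eqVneq v 0; first exact: D0.2.
have v0' : 0 < v by rewrite lt_neqAle eq_sym v0; case/andP: v01.
exact: (D_down _ _ (conj us01 Kus) v0' vus).2.
Qed.

End ImageOfInitialSegment.

Lemma bracket_tag_next {w A B c} : brk (rcons (rcons w A) B) c -> tag B = ell A.
Proof.
rewrite bracket_rcons2 => -[Bc [y By Fy]].
have XFy : X (sh (- pp A) (F y)) by rewrite Fy shK; exact: cell_X Bc.
have [_] := cell_image_X A y _ (bracket_sub_cell _ By) XFy; rewrite Fy shK => Ac.
apply/eqP; apply: contraT => ne.
have : (branch b (tag B) `&` branch b (ell A)) c by split => //; exact: cell_branch.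
by rewrite branch_disj.
Qed.

Lemma bracket_rcons2_initial {w A B u} :
  s (tag A) (tagged A) <= u <= t (tag A) (tagged A) ->
  brk (rcons w A) = b (tag A) @` `[s (tag A) (tagged A), u]%classic ->
  brk (rcons (rcons w A) B) !=set0 ->
  exists u', s (tag B) (tagged B) <= u' <= t (tag B) (tagged B) /\
    brk (rcons (rcons w A) B) = b (tag B) @` `[s (tag B) (tagged B), u']%classic.
Proof.
move=> hu E [c0 Bc0]; have eAB := bracket_tag_next Bc0.
have [us [us01 Hus]] := image_initial_segment hu.
have [hs0 [hst ht1]] := cell_bounds (tag B) (tagged B).
move: Bc0; rewrite bracket_rcons2 => -[[r0 /itvccP r0B <-] Fr0].
set sB := s (tag B) (tagged B) in hs0 hst r0B *.
set tB := t (tag B) (tagged B) in hst ht1 r0B *.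
have image_le r : sB <= r <= tB ->
    (exists2 y, brk (rcons w A) y & F y = sh (pp A) (b (tag B) r)) <-> r <= us.
  by move=> /andP[? ?]; rewrite E eAB; apply: Hus; apply/andP; split; lra.
have r0us : r0 <= us by apply/(image_le r0 r0B).
exists (Num.min tB us); split.
  have m1 : Num.min tB us <= tB by rewrite ge_min lexx.
  have m2 : sB <= Num.min tB us.
    by move: r0B => /andP[? ?]; rewrite le_min; apply/andP; split; lra.
  by rewrite m1 m2.
apply/seteqP; split.
  move=> _ [[r /itvccP rB <-] Fr]; rewrite -/sB -/tB in rB.
  exists r => //; apply/itvccP.
  by move: (rB) (image_le r rB) => /andP[? ?] [/(_ Fr) ? _]; rewrite le_min; lra.
move=> _ [r /itvccP + <-]; rewrite le_min => /andP[r1 /andP[r2 rus]].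
have rB : sB <= r <= tB by apply/andP.
by split; [exists r => //; apply/itvccP|apply/(image_le r rB)].
Qed.

Lemma bracket_initial {w A} : brk (rcons w A) !=set0 ->
  exists u, s (tag A) (tagged A) <= u <= t (tag A) (tagged A) /\
    brk (rcons w A) = b (tag A) @` `[s (tag A) (tagged A), u]%classic.
Proof.
elim/last_ind: w A => [|w A' IH] A ne.
  have [? [? ?]] := cell_bounds (tag A) (tagged A).
  by exists (t (tag A) (tagged A)); rewrite bracket1 lexx andbT.
have ne' : brk (rcons w A') !=set0.
  by case: ne => c0; rewrite bracket_rcons2 => -[_ [y0 By0 _]]; exists y0.
have [u [hu E]] := IH A' ne'.
exact: bracket_rcons2_initial hu E ne.
Qed.

Lemma bracket_image_below {w An} {k : 'I_(N (ell An))} v :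
  brk (rcons (rcons w An) (mkp k)) !=set0 -> 0 <= v <= s (ell An) k ->
  exists2 y, brk (rcons w An) y & F y = sh (pp An) (b (ell An) v).
Proof.
move=> [z]; rewrite bracket_rcons2 => -[[r /itvccP /andP[r1 r2] <-] [y0 By0 Fy0]].
move=> /andP[v0 vk].
have [u [hu E]] := bracket_initial (ex_intro _ y0 By0).
have [us [us01 Hus]] := image_initial_segment hu.
have [hsk [hstk htk]] := cell_bounds (ell An) k.
have rus : r <= us by apply/Hus; [apply/andP; split; lra|rewrite -E; exists y0].
by rewrite E; apply/Hus; [apply/andP; split|]; lra.
Qed.

Lemma bracket_pcovers_below {w An} {k j : 'I_(N (ell An))} :
  brk (rcons (rcons w An) (mkp k)) !=set0 -> (j < k)%N ->
  pcovers tau tau' F b 1 (tag An) (brk (rcons w An))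
    (ell An) (s (ell An) j) (t (ell An) j) (pp An).
Proof.
move=> ne jk.
have [hsj [hstj htj]] := cell_bounds (ell An) j.
have tjsk := cell_sorted _ _ _ jk.
have tj_le : 0 <= t (ell An) j <= s (ell An) k by apply/andP; split; lra.
have [y Ey Fy] := bracket_image_below (t (ell An) j) ne tj_le.
have [u [/andP[hu1 hu2] E]] := bracket_initial (ex_intro _ y Ey).
have [hs0 [hst ht1]] := cell_bounds (tag An) (tagged An).
set sA := s (tag An) (tagged An) in hs0 hst hu1 E *.
have [r /itvccP /andP[r1 r2] er] : (b (tag An) @` `[sA, u]%classic) y by rewrite -E.
split => //.
  by split => //; exists sA, u; split => //; lra.
exists (b (tag An) sA), y; split => //.
- by rewrite E; exists sA => //; apply/itvccP/andP; split; lra.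
- by rewrite -er; apply: le_br_param; lra.
- rewrite /= cell_min_image shK rj_branch ?lexx ?ler01 //.
  by apply: le_br_param; lra.
- rewrite /= Fy shK rj_branch; last by apply/andP; split; lra.
  by apply: le_br_param; lra.
Qed.

Lemma bracket_cell_below {w An} {k j : 'I_(N (ell An))} :
  brk (rcons (rcons w An) (mkp k)) !=set0 -> (j < k)%N ->
  brk (rcons (rcons w An) (mkp j)) = cellA (mkp j).
Proof.
move=> ne jk; have [hsj [hstj htj]] := cell_bounds (ell An) j.
have tjsk := cell_sorted _ _ _ jk.
rewrite bracket_rcons2; apply/seteqP; split => [c [] //|_ [r /itvccP /andP[r1 r2] <-]].
split; first by exists r => //; apply/itvccP/andP.
by apply: bracket_image_below ne _; apply/andP; split; lra.
Qed.

Lemma arrow_next_cell {a c} : arrow h tau tau' F b s t a c ->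
  exists w An (k : 'I_(N (ell An))),
    [/\ a = wcl (rcons w An), c = wcl (rcons (rcons w An) (mkp k))
      & brk (rcons (rcons w An) (mkp k)) !=set0].
Proof.
move=> [_ [v [vn vne] ecv] [w [A [wn [ea ec]]]]].
case/lastP: w wn ea ec => [//|w An] _ ea ec.
have : c v by rewrite ecv; exact: wsim_refl.
rewrite ec => /wsim_bracket e; rewrite -{}e in vne.
have [z /bracket_tag_next] := vne.
by case: A ec vne => iA kA /= ec vne eA; subst iA; exists w, An, kA.
Qed.

Lemma arrow_cell_below {a w An} {k j : 'I_(N (ell An))} :
  is_vertex h tau tau' F b s t a -> a = wcl (rcons w An) ->
  brk (rcons (rcons w An) (mkp k)) !=set0 -> (j < k)%N ->
  arrow h tau tau' F b s t a (vtx h tau tau' F b s t (mkp j)).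
Proof.
move=> va ea ne jk; have [hsj [hstj htj]] := cell_bounds (ell An) j.
split => //.
  exists [:: mkp j] => //; split => //; rewrite bracket1.
  by exists (b (ell An) (s (ell An) j)), (s (ell An) j) => //; apply/itvccP/andP; split.
exists (rcons w An), (mkp j); split; first by case: (w).
split => //.
by rewrite /vtx -(wclass_cell (bracket_cell_below ne jk)).
Qed.

End SunLikeMap.

Theorem mainTheorem13 (R : realType) (T : topologicalType)
  (h : R -> T) (tau tau' : T -> T) (F : T -> T)
  (L : finType) (b : L -> R -> T)
  (N : L -> nat) (s t : forall i : L, 'I_(N i) -> R)
  (ell : pidx N -> L) (pp : pidx N -> int)
  (a c : set (seq (pidx N))) :
  lifted_graph h tau tau' ->
  continuous F ->
  degree_one tau F ->
  sun_like h F b ->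
  basic_partition h tau tau' F b s t ell pp ->
  is_vertex h tau tau' F b s t a ->
  is_vertex h tau tau' F b s t c ->
  arrow h tau tau' F b s t a c ->
  exists (w : seq (pidx N)) (An Anext : pidx N) (k : 'I_(N (ell An))),
    [/\ a = wclass h tau tau' F b s t (rcons w An),
        c = wclass h tau tau' F b s t (rcons (rcons w An) Anext),
        Anext = mkp k &
        forall j : 'I_(N (ell An)), (j < k)%N ->
          pcovers tau tau' F b 1 (tag An)
            (bracket h tau tau' F b s t (rcons w An))
            (ell An) (s (ell An) j) (t (ell An) j) (pp An)
          /\ arrow h tau tau' F b s t a (vtx h tau tau' F b s t (mkp j))].
Proof.
move=> HLG HFc HD HS HB va _ ac.
have [w [An [k [ea ec ne]]]] := arrow_next_cell HLG HD HS HB ac.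
exists w, An, (mkp k), k; split => // j jk; split.
  exact: (bracket_pcovers_below HLG HFc HD HS HB ne jk).
exact: (arrow_cell_below HLG HFc HD HS HB va ea ne jk).
Qed.
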